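(* Let $N\ge 1$ be an integer, let $0<\sigma_0^2<\sigma_1^2$, and let $\alpha,\beta\in(0.5,1)$. Define $\eta_0:=\Gamma^{-1}\!\left(\tfrac N2,(1-\alpha)\Gamma(\tfrac N2)\right)\sigma_0^2$ and let $\eta_1<\eta_2$ be the GLRT thresholds, i.e., the two solutions of $L_1(\eta)=\lambda_1$ for the constant $\lambda_1>1$ chosen so that $$\frac{\Gamma(\frac N2,\frac{\eta_1}{\sigma_1^2})-\Gamma(\frac N2,\frac{\eta_2}{\sigma_1^2})}{\Gamma(\frac N2)}=\beta .$$ Let $\eta_1^*:=\Gamma^{-1}\!\left(\tfrac N2,(1-\alpha)\Gamma(\tfrac N2)\right)\sigma_0^2$ and let $\eta_2^*\neq\eta_1^*$ be a solution of $\left(\frac{\eta_1^*}{\eta_2^*}\right)^{N/2}\exp\!\left(\frac{\eta_2^*-\eta_1^*}{2\sigma_1^2}\right)=1$. If $$\beta>\frac{\Gamma(\frac N2,\frac{\eta_1^*}{\sigma_1^2})}{\Gamma(\frac N2)}-\frac{\Gamma(\frac N2,\frac{\eta_2^*}{\sigma_1^2})}{\Gamma(\frac N2)},$$ then the decision regions $\mathcal{R}_0=\{Y<\eta_0\}$ and $\mathcal{R}_1=\{\eta_1<Y<\eta_2\}$ overlap, i.e., $\eta_1<\eta_0$.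
   Context: Observations $y_0,\dots,y_{N-1}$ are i.i.d. $\mathcal{N}(0,\sigma^2)$; the test statistic is $Y=\sum_{n=0}^{N-1}y_n^2$. Hypotheses: $\mathcal{H}_0:\sigma^2=\sigma_0^2$ (channel idle), $\mathcal{H}_1:\sigma^2=\sigma_1^2$ (legitimate user only), $\mathcal{H}_2:\sigma^2\in(\sigma_0^2,\sigma_1^2)\cup(\sigma_1^2,\infty)$ (illegitimate user present). $\Gamma(a)$ is the Gamma function, $\Gamma(a,x)=\int_x^\infty t^{a-1}e^{-t}dt$ the upper incomplete Gamma function, and $\Gamma^{-1}(a,\cdot)$ the inverse of $x\mapsto\Gamma(a,x)$. The GLRT likelihood ratio as a function of $Y>0$ is $L_1(Y)=\left(\frac{N\sigma_1^2}{Y}\right)^{N/2}\exp\!\left(\frac{Y}{2\sigma_1^2}-\frac N2\right)$, which decreases on $(0,N\sigma_1^2)$, increases on $(N\sigma_1^2,\infty)$ and has minimum value $1$; so for $\lambda_1>1$ the equation $L_1(\eta)=\lambda_1$ has two solutions $\eta_1<N\sigma_1^2<\eta_2$. The detection subproblem declares $\mathcal{H}_0$ on $\mathcal{R}_0=\{Y<\eta_0\}$; the recognition subproblem declares $\mathcal{H}_1$ on $\mathcal{R}_1=\{\eta_1<Y<\eta_2\}$; ''overlapping'' means $\mathcal{R}_0\cap\mathcal{R}_1\neq\emptyset$, i.e., $\eta_1<\eta_0$. *)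

From HB Require Import structures.
From mathcomp Require Import all_boot all_order all_algebra.
From mathcomp Require Import all_classical all_reals all_analysis.
Set Implicit Arguments. Unset Strict Implicit. Unset Printing Implicit Defensive.
Import Order.TTheory GRing.Theory Num.Theory.
Local Open Scope classical_set_scope.
Local Open Scope ring_scope.

Definition upper_gamma (R : realType) (a x : R) : R :=
  Rintegral (@lebesgue_measure R) `[x, +oo[%classic
    (fun t : R => t `^ (a - 1) * expR (- t)).

Definition Gamma (R : realType) (a : R) : R := upper_gamma a 0.

(* GLRT likelihood ratio  L_1(Y) = (N σ1² / Y)^(N/2) exp(Y/(2σ1²) - N/2);
   s1 stands for the variance σ1². *)
Definition L1 (R : realType) (N : nat) (s1 Y : R) : R :=
  (N%:R * s1 / Y) `^ (N%:R / 2) * expR (Y / (2 * s1) - N%:R / 2).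

(* Suppose eta0 <= eta1.  As Γ(N/2, .) is strictly decreasing on (0, +oo),
   eta0 = eta1s.  With a = N/2, both L1 and the equation defining eta2s are
   exponentials of H(Y) = Y/(2σ1²) - a ln Y, which decreases on (0, Nσ1²] and
   increases on [Nσ1², +oo).  Hence H(eta1) = H(eta2) and H(eta1s) = H(eta2s),
   eta2s lies beyond Nσ1², and eta1s <= eta1 < Nσ1² gives
   H(eta2s) = H(eta1s) >= H(eta1) = H(eta2), i.e. eta2 <= eta2s.  Monotonicity
   of Γ(N/2, .) then bounds β by the left-hand side of the hypothesis on eta1s,
   eta2s: a contradiction. *)

From HB Require Import structures.
From mathcomp Require Import all_boot all_order all_algebra.
From mathcomp Require Import all_classical all_reals all_analysis.
From mathcomp Require Import ring lra measurable_realfun exponential_distribution.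
Import Order.TTheory GRing.Theory Num.Theory.
Local Open Scope ring_scope.

Section glrt_exponent.
Context {R : realType}.

Lemma lt_ln1Dx (x : R) : -1 < x -> x != 0 -> ln (1 + x) < x.
Proof.
move=> xN1 x0; rewrite -ltr_expR lnK ?posrE; [exact: expR_gt1Dx | lra].
Qed.

Lemma lt_lnB [y z : R] : 0 < y -> 0 < z -> y != z -> ln z - ln y < (z - y) / y.
Proof.
move=> y0 z0 yz; rewrite -ln_div ?posrE //.
have zyE : z / y = 1 + (z - y) / y by rewrite mulrBl divff ?gt_eqF // addrC subrK.
rewrite zyE; apply: lt_ln1Dx.
- by rewrite mulrBl divff ?gt_eqF //; have := divr_gt0 z0 y0; lra.
- by apply: mulf_neq0; [rewrite subr_eq0 eq_sym | rewrite invr_eq0 gt_eqF].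
Qed.

Definition glrt_exponent (s a Y : R) := Y / (2 * s) - a * ln Y.

Lemma L1_expR (N : nat) (s Y : R) : (0 < N)%N -> 0 < s -> 0 < Y ->
  L1 N s Y =
  expR (N%:R / 2 * ln (N%:R * s) - N%:R / 2 + glrt_exponent s (N%:R / 2) Y).
Proof.
move=> N0 s0 Y0; have NsY0 : 0 < N%:R * s / Y by rewrite !mulr_gt0 ?ltr0n ?invr_gt0.
rewrite /L1 /powR gt_eqF // -expRD ln_div ?posrE ?mulr_gt0 ?ltr0n //.
by congr expR; rewrite /glrt_exponent; ring.
Qed.

Lemma powR_ratio_expR (s a Y Z : R) : 0 < Y -> 0 < Z ->
  (Y / Z) `^ a * expR ((Z - Y) / (2 * s)) =
  expR (glrt_exponent s a Z - glrt_exponent s a Y).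
Proof.
move=> Y0 Z0; rewrite /powR gt_eqF ?divr_gt0 // -expRD ln_div ?posrE //.
by congr expR; rewrite /glrt_exponent; ring.
Qed.

Lemma glrt_exponentB (s a Y Z : R) :
  glrt_exponent s a Z - glrt_exponent s a Y = (Z - Y) / (2 * s) - a * (ln Z - ln Y).
Proof. by rewrite /glrt_exponent; ring. Qed.

Lemma glrt_exponent_decr [s a : R] : 0 < s -> 0 < a ->
  {in `]0, 2 * a * s] &, {homo glrt_exponent s a : Y Z /~ Y < Z}}.
Proof.
move=> s0 a0 Z Y; rewrite !in_itv /= => /andP[Z0 Zm] /andP[Y0 _] YZ.
rewrite -subr_lt0 glrt_exponentB.
set u := (Z - Y) / (2 * s); set v := (Z - Y) / Z.
have lnZY : v < ln Z - ln Y.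
  by have := lt_lnB Z0 Y0 (negbT (gt_eqF YZ)); rewrite /v -[Y - Z]opprB mulNr; lra.
have s2 : 0 < 2 * s by lra.
have uE : u * (2 * s) = Z - Y by rewrite /u divfK // gt_eqF.
have vE : v * Z = Z - Y by rewrite /v divfK // gt_eqF.
have v0 : 0 < v by rewrite /v divr_gt0 // subr_gt0.
have uv : u <= a * v.
  rewrite -subr_ge0 -(pmulr_lge0 _ s2).
  have -> : (a * v - u) * (2 * s) = v * (2 * a * s - Z) by rewrite mulrBl uE -vE; ring.
  by rewrite mulr_ge0 ?subr_ge0 // ltW.
nra.
Qed.

Lemma glrt_exponent_incr [s a : R] : 0 < s -> 0 < a ->
  {in `[2 * a * s, +oo[ &, {homo glrt_exponent s a : Y Z / Y < Z}}.
Proof.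
move=> s0 a0 Y Z; rewrite !in_itv /= !andbT => mY _ YZ.
have Y0 : 0 < Y by apply: lt_le_trans mY; rewrite !mulr_gt0.
have Z0 : 0 < Z by lra.
rewrite -subr_gt0 glrt_exponentB.
set u := (Z - Y) / (2 * s); set w := (Z - Y) / Y.
have lnZY : ln Z - ln Y < w := lt_lnB Y0 Z0 (negbT (lt_eqF YZ)).
have s2 : 0 < 2 * s by lra.
have uE : u * (2 * s) = Z - Y by rewrite /u divfK // gt_eqF.
have wE : w * Y = Z - Y by rewrite /w divfK // gt_eqF.
have w0 : 0 < w by rewrite /w divr_gt0 // subr_gt0.
have wu : a * w <= u.
  rewrite -subr_ge0 -(pmulr_lge0 _ s2).
  have -> : (u - a * w) * (2 * s) = w * (Y - 2 * a * s) by rewrite mulrBl uE -wE; ring.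
  by rewrite mulr_ge0 ?subr_ge0 // ltW.
nra.
Qed.

Lemma glrt_second_root_le [s a y1 y2 z1 z2 : R] : 0 < s -> 0 < a ->
    0 < z1 -> z1 <= y1 -> y1 <= 2 * a * s -> 2 * a * s <= y2 ->
    0 < z2 -> z2 != z1 ->
    glrt_exponent s a y1 = glrt_exponent s a y2 ->
    glrt_exponent s a z1 = glrt_exponent s a z2 ->
  y2 <= z2.
Proof.
move=> s0 a0 z1_gt0 zy1 y1m my2 z2_gt0 z21 Hy Hz.
have Hdec := le_nmono_in (glrt_exponent_decr s0 a0).
have Hinc := le_mono_in (glrt_exponent_incr s0 a0).
have z1m : z1 \in `]0, 2 * a * s] by rewrite in_itv /= z1_gt0; lra.
have mz2 : 2 * a * s <= z2.
  rewrite leNgt; apply/negP => z2m; move/eqP: z21; apply.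
  by apply: (dec_inj_in Hdec) (esym Hz) => //; rewrite in_itv /= z2_gt0 ltW.
by rewrite -Hinc ?in_itv /= ?andbT // -Hy -Hz Hdec // in_itv /= y1m andbT; lra.
Qed.

End glrt_exponent.

Section upper_gamma.
Context {R : realType}.
Local Open Scope classical_set_scope.

Lemma powR_le_expR_half (b : R) [x : R] : 0 < x ->
  exists2 C : R, 0 < C & forall t, x <= t -> t `^ b <= C * expR (t / 2).
Proof.
move=> x0; have [b0|b0] := leP 0 b.
- (* with m := 2b + 1: b ln t <= b (ln m - 1) + (b / m) t and b / m <= 1/2 *)
  pose m := 2 * b + 1; have m0 : 0 < m by rewrite /m; lra.
  exists (expR (b * (ln m - 1))); first exact: expR_gt0.
  move=> t xt; have t0 : 0 < t by lra.
  rewrite /powR gt_eqF // -expRD ler_expR.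
  have ln_tm : ln t - ln m <= t / m - 1.
    rewrite -ln_div ?posrE //; have := @le_ln1Dx R (t / m - 1).
    by rewrite subrKC; apply; have := divr_gt0 t0 m0; lra.
  have bm : b / m <= 2^-1 by rewrite ler_pdivrMr // /m; lra.
  have btm : b * (t / m) <= t / 2.
    by rewrite mulrA [b * t]mulrC -mulrA ler_wpM2l //; lra.
  have := ler_wpM2l b0 ln_tm; rewrite !mulrBr mulr1; lra.
- exists (expR (b * ln x)); first exact: expR_gt0.
  move=> t xt; have t0 : 0 < t by lra.
  rewrite /powR gt_eqF // -expRD ler_expR.
  have : b * ln t <= b * ln x by rewrite ler_wnM2l ?ler_ln ?posrE // ltW.
  have : 0 <= t / 2 by rewrite divr_ge0 //; lra.
  lra.
Qed.

Definition gamma_integrand (a t : R) := t `^ (a - 1) * expR (- t).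

Lemma measurable_gamma_integrand (a : R) (D : set R) :
  measurable_fun D (gamma_integrand a).
Proof.
apply: measurable_funTS; apply: measurable_funM; first exact: measurable_powR.
by apply: measurableT_comp => //; exact: measurable_expR.
Qed.

Lemma gamma_integrand_integrable (a : R) [x : R] : 0 < x ->
  (@lebesgue_measure R).-integrable `[x, +oo[ (EFin \o gamma_integrand a).
Proof.
move=> x0; have [C C0 powR_le] := powR_le_expR_half (a - 1) x0.
eapply le_integrable; last first.
- apply: (integrableZl _ (2 * C)) => //; apply: (integrableS measurableT) => //.
  by apply: (@integrable_exponential_pdf R 2^-1); rewrite invr_gt0; lra.
- move=> t /=; rewrite in_itv /= andbT => xt.
  have t0 : 0 < t by lra.
  rewrite exponential_pdfE; last lra.
  have integrand0 : 0 <= gamma_integrand a t by rewrite mulr_ge0 ?powR_ge0 ?expR_ge0.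
  rewrite lee_fin !ger0_norm //; last by rewrite !mulr_ge0 ?invr_ge0 ?expR_ge0 //; lra.
  have -> : 2 * C * (2^-1 * expR (- 2^-1 * t)) = C * expR (t / 2) * expR (- t).
    by rewrite -[RHS]mulrA -expRD (_ : t / 2 + - t = - 2^-1 * t); field.
  by rewrite /gamma_integrand ler_wpM2r ?expR_ge0 ?powR_le.
- by apply/measurable_EFinP; exact: measurable_gamma_integrand.
- exact: measurable_itv.
Qed.

Lemma gamma_integrand_ge (a x y t : R) : 0 < x -> x <= t -> t <= y ->
  expR (Num.min ((a - 1) * ln x) ((a - 1) * ln y)) * expR (- y) <=
  gamma_integrand a t.
Proof.
move=> x0 xt ty; have t0 : 0 < t by lra.
rewrite /gamma_integrand /powR gt_eqF //.
apply: ler_pM; rewrite ?expR_ge0 // ler_expR; last lra.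
have lnxt : ln x <= ln t by rewrite ler_ln ?posrE.
have lnty : ln t <= ln y by rewrite ler_ln ?posrE //; lra.
rewrite ge_min; have [a1|a1] := leP 0 (a - 1).
- by rewrite ler_wpM2l.
- by rewrite orbC ler_wnM2l // ltW.
Qed.

Lemma upper_gamma_decr (a : R) :
  {in Num.pos &, {homo upper_gamma a : x y /~ x < y}}.
Proof.
move=> y x; rewrite !posrE => _ x0 xy.
rewrite /upper_gamma.
have xyE : `[x, +oo[%classic = `[x, y[%classic `|` `[y, +oo[%classic.
  by rewrite -itv_bndbnd_setU // bnd_simp ltW.
rewrite xyE Rintegral_setU //; first last.
- apply/disj_setPS => t [] /=; rewrite !in_itv /= andbT => /andP[_ ty] yt; lra.
- by rewrite -xyE; exact: gamma_integrand_integrable.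
rewrite ltrDr.
set c := expR (Num.min ((a - 1) * ln x) ((a - 1) * ln y)) * expR (- y).
have c0 : 0 < c by rewrite mulr_gt0 ?expR_gt0.
have cst_int : \int[lebesgue_measure]_(t in `[x, y[) cst c t = c * (y - x).
  rewrite Rintegral_cst; last exact: measurable_itv.
  by have := lebesgue_measure_itv `[x, y[%R; rewrite /= lte_fin xy -EFinB => ->.
apply: (@lt_le_trans _ _ (c * (y - x))); first by rewrite mulr_gt0 // subr_gt0.
rewrite -cst_int; apply: le_Rintegral.
- exact: measurable_itv.
- apply: measurable_bounded_integrable; first exact: measurable_itv.
  + by have := lebesgue_measure_itv `[x, y[%R; rewrite /= lte_fin xy => ->; exact: ltry.
  + exact: measurable_cst.
  + exact: bounded_cst.
- apply: (integrableS _ _ _ (gamma_integrand_integrable a x0)).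
  + exact: measurable_itv.
  + exact: measurable_itv.
  + by move=> t /=; rewrite !in_itv /= andbT => /andP[].
- move=> t /=; rewrite in_itv /= => /andP[xt ty].
  by apply: gamma_integrand_ge => //; exact: ltW.
Qed.

Lemma upper_gamma_inj (a : R) : {in Num.pos &, injective (upper_gamma a)}.
Proof. exact/dec_inj_in/le_nmono_in/upper_gamma_decr. Qed.

Lemma le_upper_gammaB (a x1 x2 y1 y2 : R) :
    0 < y1 -> y1 <= x1 -> x1 <= x2 -> x2 <= y2 ->
  upper_gamma a x1 - upper_gamma a x2 <= upper_gamma a y1 - upper_gamma a y2.
Proof.
move=> y1_gt0 yx1 x12 xy2; have Gmono := le_nmono_in (upper_gamma_decr a).
by apply: lerB; rewrite Gmono ?posrE //; lra.
Qed.

End upper_gamma.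

Theorem theorem1 (R : realType) (N : nat)
    (s0 s1 alpha beta eta0 eta1 eta2 lambda1 eta1s eta2s : R) :
  (1 <= N)%N -> 0 < s0 -> s0 < s1 ->
  1 / 2 < alpha -> alpha < 1 -> 1 / 2 < beta -> beta < 1 ->
  (* eta0 = Γ^{-1}(N/2, (1-α)Γ(N/2)) σ0² *)
  0 < eta0 ->
  upper_gamma (N%:R / 2) (eta0 / s0) = (1 - alpha) * Gamma (N%:R / 2) ->
  (* GLRT thresholds *)
  1 < lambda1 ->
  0 < eta1 -> eta1 < N%:R * s1 -> N%:R * s1 < eta2 ->
  L1 N s1 eta1 = lambda1 -> L1 N s1 eta2 = lambda1 ->
  (upper_gamma (N%:R / 2) (eta1 / s1) - upper_gamma (N%:R / 2) (eta2 / s1))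
    / Gamma (N%:R / 2) = beta ->
  (* eta1s = Γ^{-1}(N/2, (1-α)Γ(N/2)) σ0² *)
  0 < eta1s ->
  upper_gamma (N%:R / 2) (eta1s / s0) = (1 - alpha) * Gamma (N%:R / 2) ->
  (* eta2s <> eta1s solves (eta1s/eta2s)^(N/2) exp((eta2s-eta1s)/(2 s1)) = 1 *)
  0 < eta2s -> eta2s <> eta1s ->
  (eta1s / eta2s) `^ (N%:R / 2) * expR ((eta2s - eta1s) / (2 * s1)) = 1 ->
  upper_gamma (N%:R / 2) (eta1s / s1) / Gamma (N%:R / 2)
    - upper_gamma (N%:R / 2) (eta2s / s1) / Gamma (N%:R / 2) < beta ->
  eta1 < eta0.
Proof.
move=> N_gt0 s0_gt0 s01 _ _ beta_gt _ eta0_gt0 eta0_def _ eta1_gt0 eta1_lt eta2_gt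
  L1_eta1 L1_eta2 beta_def eta1s_gt0 eta1s_def eta2s_gt0 eta2s_neq star lt_beta.
rewrite ltNge; apply/negP => eta01.
set a := N%:R / 2 in eta0_def beta_def eta1s_def star lt_beta.
have s1_gt0 : 0 < s1 by lra.
have a_gt0 : 0 < a by rewrite divr_gt0 ?ltr0n.
have Ns1E : N%:R * s1 = 2 * a * s1 by rewrite /a; field.
have eta0_eq : eta0 = eta1s.
  apply: (mulIf (invr_neq0 (lt0r_neq0 s0_gt0))).
  by apply: (upper_gamma_inj a); rewrite ?posrE ?divr_gt0 // eta0_def eta1s_def.
have H12 : glrt_exponent s1 a eta1 = glrt_exponent s1 a eta2.
  apply: (addrI (a * ln (N%:R * s1) - a)); apply: expR_inj.
  by rewrite -!L1_expR ?L1_eta1 ?L1_eta2 //; lra.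
have H12s : glrt_exponent s1 a eta1s = glrt_exponent s1 a eta2s.
  rewrite powR_ratio_expR // -expR0 in star.
  by move/expR_inj/eqP: star; rewrite subr_eq0 => /eqP.
have eta2_le : eta2 <= eta2s.
  apply: (glrt_second_root_le s1_gt0 a_gt0 eta1s_gt0 _ _ _ eta2s_gt0 _ H12 H12s).
  - by rewrite -eta0_eq.
  - by rewrite -Ns1E ltW.
  - by rewrite -Ns1E ltW.
  - exact/eqP.
have G12 : 0 < upper_gamma a (eta1 / s1) - upper_gamma a (eta2 / s1).
  by rewrite subr_gt0 upper_gamma_decr ?posrE ?divr_gt0 // ?ltr_pM2r ?invr_gt0 //; lra.
have Gamma_gt0 : 0 < Gamma a.
  (* from beta > 0 rather than from the integral *)
  by rewrite -invr_gt0 -(pmulr_rgt0 _ G12) beta_def; lra.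
rewrite -beta_def -mulrBl ltr_pM2r ?invr_gt0 // in lt_beta.
suff : upper_gamma a (eta1 / s1) - upper_gamma a (eta2 / s1) <=
       upper_gamma a (eta1s / s1) - upper_gamma a (eta2s / s1) by lra.
by apply: le_upper_gammaB; rewrite ?divr_gt0 ?ler_pM2r ?invr_gt0 // -?eta0_eq; lra.
Qed.
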